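(* For every reachable pointed lasso automaton $X=(X_1,X_2,\overline{x},\delta_1,\delta_2,\delta_3)$, define $T(X)=(\sim_\delta,\sim)$ as in the context. Then $\sim$ is a well-defined equivalence relation on $\Sigma^{\mathrm{up}}$, $(\sim_\delta,\sim)$ is a congruence on the free Wilke algebra $(\Sigma^+,\Sigma^{\mathrm{up}})$, and whenever there is a morphism $X\to Y$ of reachable pointed lasso automata, $T(X)\subseteq T(Y)$ componentwise. (That is, $T$ is a well-defined functor from $\mathrm{Alg}_r(G_1)$ to the preorder of Wilke algebra congruences under inclusion.)
   Context: $\Sigma$ is a finite alphabet, $\Sigma^+$ the nonempty words, $\Sigma^{\ast+}=\Sigma^\ast\times\Sigma^+$ the lassos, $\Sigma^{\mathrm{up}}=\{uv^\omega\mid u\in\Sigma^\ast,v\in\Sigma^+\}$ the ultimately periodic words; $(u,v)\sim_\gamma(u',v')$ iff $uv^\omega=u'v'^\omega$. A pointed lasso automaton is $(X_1,X_2,\overline{x},\delta_1,\delta_2,\delta_3)$ with disjoint $X_1,X_2$, $\overline{x}\in X_1$, $\delta_1:X_1\times\Sigma\to X_1$, $\delta_2:X_1\times\Sigma\to X_2$, $\delta_3:X_2\times\Sigma\to X_2$; extend $\delta_1,\delta_3$ to words, $\delta_\circ(x,av)=\delta_3(\delta_2(x,a),v)$ for $x\in X_1$, $\delta(x,(u,v))=\delta_\circ(\delta_1(x,u),v)$. It is reachable if every $x\in X_1$ is $\delta_1(\overline{x},w)$ for some word and every $y\in X_2$ is $\delta(\overline{x},(u,v))$ for some lasso; morphisms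 are pairs of maps preserving the initial state and commuting with $\delta_1,\delta_2,\delta_3$; $\mathrm{Alg}_r(G_1)$ is the resulting category. A set $c\subseteq X_2$ is admissible if the accepted lasso language $\{(u,v)\mid\delta(\overline{x},(u,v))\in c\}$ is closed under $\sim_\gamma$; $\mathrm{Adm}(X_2)$ is the set of admissible sets. $\sim_\delta\subseteq\Sigma^+\times\Sigma^+$: $u\sim_\delta v$ iff $\delta_1(x,u)=\delta_1(x,v)$ and $\delta_\circ(x,u)=\delta_\circ(x,v)$ for all $x\in X_1$, and $\delta_3(y,u)=\delta_3(y,v)$ for all $y\in X_2$. $\sim$ on $\Sigma^{\mathrm{up}}$: $uv^\omega\sim u'v'^\omega$ iff for all $x\in X_1$ and $c\in\mathrm{Adm}(X_2)$, $\delta(x,(u,v))\in c\iff\delta(x,(u',v'))\in c$. The free Wilke algebra over $\Sigma$ is $(\Sigma^+,\Sigma^{\mathrm{up}})$ with concatenation on $\Sigma^+$, mixed product $u\cdot(vw^\omega)=(uv)w^\omega$ and $\omega$-power $u\mapsto u^\omega$; a congruence on it is a pair of equivalence relations on $\Sigma^+$ and $\Sigma^{\mathrm{up}}$ compatible with these three operations. *)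

From mathcomp Require Import all_boot.
Set Implicit Arguments. Unset Strict Implicit. Unset Printing Implicit Defensive.

(* Pointed lasso automaton over alphabet S. X1, X2 are separate types,
   hence disjoint. *)
Record lasso_aut (S : finType) : Type := LassoAut {
  st1 : Type; st2 : Type; init : st1;
  d1 : st1 -> S -> st1; d2 : st1 -> S -> st2; d3 : st2 -> S -> st2 }.

Section Defs.
Variable S : finType.
Implicit Types (u v w : seq S).

Definition d1w (X : lasso_aut S) (x : st1 X) u : st1 X := foldl (@d1 S X) x u.
Definition d3w (X : lasso_aut S) (y : st2 X) u : st2 X := foldl (@d3 S X) y u.
Definition dcirc (X : lasso_aut S) (x : st1 X) v : option (st2 X) :=
  match v with [::] => None | a :: v' => Some (d3w (d2 x a) v') end.
Definition dlasso (X : lasso_aut S) (x : st1 X) u v : option (st2 X) :=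
  dcirc (d1w x u) v.

Definition inc (T : Type) (o : option T) (c : T -> Prop) : Prop :=
  match o with Some y => c y | None => False end.

(* the ultimately periodic omega-word u v^omega (values are Some _ when v is
   nonempty) *)
Definition upw u v : nat -> option S :=
  fun n => if n < size u then onth u n else onth v ((n - size u) %% size v).

Definition gamma u v u' v' : Prop := forall n, upw u v n = upw u' v' n.

Definition reachable (X : lasso_aut S) : Prop :=
  (forall x : st1 X, exists w, d1w (init X) w = x) /\
  (forall y : st2 X, exists u v, v != [::] /\ dlasso (init X) u v = Some y).

Definition admissible (X : lasso_aut S) (c : st2 X -> Prop) : Prop :=
  forall u v u' v', v != [::] -> v' != [::] -> gamma u v u' v' ->
    (inc (dlasso (init X) u v) c <-> inc (dlasso (init X) u' v') c).

Definition sim_delta (X : lasso_aut S) u v : Prop :=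
  (forall x : st1 X, d1w x u = d1w x v /\ dcirc x u = dcirc x v) /\
  (forall y : st2 X, d3w y u = d3w y v).

Definition lasso_sim (X : lasso_aut S) u v u' v' : Prop :=
  forall (x : st1 X) (c : st2 X -> Prop), admissible c ->
    (inc (dlasso x u v) c <-> inc (dlasso x u' v') c).

Definition rep (w : nat -> option S) u v : Prop :=
  v != [::] /\ forall n, w n = upw u v n.
Definition is_up (w : nat -> option S) : Prop := exists u v, rep w u v.

Definition sim (X : lasso_aut S) (w w' : nat -> option S) : Prop :=
  forall u v u' v', rep w u v -> rep w' u' v' -> lasso_sim X u v u' v'.

Definition mixprod u (w : nat -> option S) : nat -> option S :=
  fun n => if n < size u then onth u n else w (n - size u).
Definition omega_pow u : nat -> option S := upw [::] u.

Definition is_morphism (X Y : lasso_aut S) (f1 : st1 X -> st1 Y)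
  (f2 : st2 X -> st2 Y) : Prop :=
  [/\ f1 (init X) = init Y,
      forall x a, f1 (d1 x a) = d1 (f1 x) a,
      forall x a, f2 (d2 x a) = d2 (f1 x) a &
      forall y a, f2 (d3 y a) = d3 (f2 y) a].

End Defs.

From mathcomp Require Import all_boot.
Set Implicit Arguments. Unset Strict Implicit.

(* Reachability writes every state of X1 as d1(x0, w), and
   d(d1(x0, w), (u, v)) = d(x0, (wu, v)); as prefixing w preserves ~gamma, an
   admissible set is closed under ~gamma from every state, not only from x0.
   Hence ~ does not depend on the lasso representatives, and the congruence
   laws reduce to exhibiting representatives of u.(r s^w) and u^w.  For
   functoriality, a morphism into a reachable automaton is surjective on both
   state sets, and admissible sets pull back along it. *)

Section Lassos.
Variable S : finType.
Implicit Types (u v w : seq S).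

Lemma upw_cat w u v n :
  upw (w ++ u) v n = if n < size w then onth w n else upw u v (n - size w).
Proof.
rewrite /upw size_cat onth_cat; case: (ltnP n (size w)) => [lt_n_w | le_w_n].
  by rewrite (leq_trans lt_n_w) // leq_addr.
by rewrite ltn_subLR // subnDA.
Qed.

Lemma gamma_sym u v u' v' : gamma u v u' v' -> gamma u' v' u v.
Proof. by move=> G n; rewrite G. Qed.

Lemma gamma_catl w u v u' v' : gamma u v u' v' -> gamma (w ++ u) v (w ++ u') v'.
Proof. by move=> G n; rewrite !upw_cat G. Qed.

Lemma rep_gamma (a : nat -> option S) u v u' v' :
  rep a u v -> rep a u' v' -> gamma u v u' v'.
Proof. by move=> [_ Ea] [_ Ea'] n; rewrite -Ea -Ea'. Qed.

Lemma rep_mixprod (a : nat -> option S) w u v :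
  rep a u v -> rep (mixprod w a) (w ++ u) v.
Proof. by move=> [nv Ea]; split=> // n; rewrite /mixprod upw_cat Ea. Qed.

Lemma rep_omega_pow v : v != [::] -> rep (omega_pow v) [::] v.
Proof. by []. Qed.

Lemma inc_omap (A B : Type) (f : A -> B) (o : option A) (c : B -> Prop) :
  inc (omap f o) c = inc o (fun a => c (f a)).
Proof. by case: o. Qed.

Section Runs.
Variable X : lasso_aut S.

Lemma d1w_cat (x : st1 X) u v : d1w x (u ++ v) = d1w (d1w x u) v.
Proof. exact: foldl_cat. Qed.

Lemma d3w_cat (y : st2 X) u v : d3w y (u ++ v) = d3w (d3w y u) v.
Proof. exact: foldl_cat. Qed.

Lemma dcirc_cat (x : st1 X) u v : u != [::] ->
  dcirc x (u ++ v) = omap (fun y => d3w y v) (dcirc x u).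
Proof. by case: u => //= a u _; rewrite d3w_cat. Qed.

Lemma dlasso_cat (x : st1 X) w u v : dlasso x (w ++ u) v = dlasso (d1w x w) u v.
Proof. by rewrite /dlasso d1w_cat. Qed.

Lemma dlasso_nil (x : st1 X) v : dlasso x [::] v = dcirc x v.
Proof. by []. Qed.

Lemma sim_delta_refl u : sim_delta X u u.
Proof. by []. Qed.

Lemma sim_delta_sym u v : sim_delta X u v -> sim_delta X v u.
Proof.
move=> [D1 D3]; split=> [x | y]; last by rewrite D3.
by have [-> ->] := D1 x.
Qed.

Lemma sim_delta_trans u v w :
  sim_delta X u v -> sim_delta X v w -> sim_delta X u w.
Proof.
move=> [D1 D3] [E1 E3]; split=> [x | y]; last by rewrite D3 E3.
by have [-> ->] := D1 x; have [-> ->] := E1 x.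
Qed.

Lemma sim_delta_cat u u' v v' : u != [::] -> u' != [::] ->
  sim_delta X u u' -> sim_delta X v v' -> sim_delta X (u ++ v) (u' ++ v').
Proof.
move=> nu nu' [D1 D3] [E1 E3]; split=> [x | y]; last by rewrite !d3w_cat D3 E3.
rewrite !d1w_cat !dcirc_cat //; have [-> ->] := D1 x.
by rewrite (E1 _).1; split=> //; case: (dcirc x u') => //= y; rewrite E3.
Qed.

Hypothesis HX : reachable X.

Lemma admissible_gamma (c : st2 X -> Prop) (x : st1 X) u v u' v' :
  admissible c -> v != [::] -> v' != [::] -> gamma u v u' v' ->
  (inc (dlasso x u v) c <-> inc (dlasso x u' v') c).
Proof.
move=> adm_c nv nv' G; have [w <-] := HX.1 x.
by rewrite -!dlasso_cat; apply: adm_c => //; apply: gamma_catl.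
Qed.

Lemma lasso_sim_gamma u v u' v' u1 v1 u1' v1' :
  v != [::] -> v' != [::] -> v1 != [::] -> v1' != [::] ->
  gamma u v u1 v1 -> gamma u' v' u1' v1' ->
  lasso_sim X u v u' v' -> lasso_sim X u1 v1 u1' v1'.
Proof.
move=> nv nv' nv1 nv1' G G' L x c adm_c.
apply: iff_trans (iff_sym (admissible_gamma x adm_c nv nv1 G)) _.
exact: iff_trans (L x c adm_c) (admissible_gamma x adm_c nv' nv1' G').
Qed.

Lemma lasso_sim_gammaE u v u' v' u1 v1 u1' v1' :
  v != [::] -> v' != [::] -> v1 != [::] -> v1' != [::] ->
  gamma u v u1 v1 -> gamma u' v' u1' v1' ->
  (lasso_sim X u v u' v' <-> lasso_sim X u1 v1 u1' v1').
Proof.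
move=> nv nv' nv1 nv1' G G'; split; apply: lasso_sim_gamma => //;
  exact: gamma_sym.
Qed.

Lemma sim_of_rep (a a' : nat -> option S) u v u' v' :
  rep a u v -> rep a' u' v' -> lasso_sim X u v u' v' -> sim X a a'.
Proof.
move=> Ra Ra' L p q p' q' Rp Rp'.
exact: lasso_sim_gamma Ra.1 Ra'.1 Rp.1 Rp'.1 (rep_gamma Ra Rp) (rep_gamma Ra' Rp') L.
Qed.

Lemma sim_refl (a : nat -> option S) : sim X a a.
Proof.
move=> u v u' v' Ra Ra' x c adm_c.
exact: admissible_gamma adm_c Ra.1 Ra'.1 (rep_gamma Ra Ra').
Qed.

Lemma sim_sym (a a' : nat -> option S) : sim X a a' -> sim X a' a.
Proof. by move=> E u v u' v' Ra Ra' x c adm_c; apply: iff_sym; apply: E. Qed.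

Lemma sim_trans (a a' a'' : nat -> option S) :
  is_up a' -> sim X a a' -> sim X a' a'' -> sim X a a''.
Proof.
move=> [p [q Ra']] E E' u v u' v' Ra Ra'' x c adm_c.
exact: iff_trans (E _ _ _ _ Ra Ra' x c adm_c) (E' _ _ _ _ Ra' Ra'' x c adm_c).
Qed.

Lemma sim_mixprod u u' (a a' : nat -> option S) :
  is_up a -> is_up a' -> sim_delta X u u' -> sim X a a' ->
  sim X (mixprod u a) (mixprod u' a').
Proof.
move=> [r [s Ra]] [r' [s' Ra']] [D1 _] E.
apply: sim_of_rep (rep_mixprod u Ra) (rep_mixprod u' Ra') _ => x c adm_c.
by rewrite !dlasso_cat (D1 x).1; apply: E.
Qed.

Lemma sim_omega_pow u u' : u != [::] -> u' != [::] ->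
  sim_delta X u u' -> sim X (omega_pow u) (omega_pow u').
Proof.
move=> nu nu' [D1 _].
apply: sim_of_rep (rep_omega_pow nu) (rep_omega_pow nu') _ => x c _.
by rewrite !dlasso_nil (D1 x).2.
Qed.

End Runs.

Section Morphism.
Variables (X Y : lasso_aut S) (f1 : st1 X -> st1 Y) (f2 : st2 X -> st2 Y).
Hypothesis f_morph : is_morphism f1 f2.

Lemma morph_d1w x u : f1 (d1w x u) = d1w (f1 x) u.
Proof.
have [_ f_d1 _ _] := f_morph.
by elim: u x => // a u IHu x; apply: etrans (IHu (d1 x a)) _; rewrite f_d1.
Qed.

Lemma morph_d3w y u : f2 (d3w y u) = d3w (f2 y) u.
Proof.
have [_ _ _ f_d3] := f_morph.
by elim: u y => // a u IHu y; apply: etrans (IHu (d3 y a)) _; rewrite f_d3.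
Qed.

Lemma morph_dcirc x u : dcirc (f1 x) u = omap f2 (dcirc x u).
Proof. by have [_ _ f_d2 _] := f_morph; case: u => //= a u; rewrite morph_d3w f_d2. Qed.

Lemma morph_dlasso x u v : dlasso (f1 x) u v = omap f2 (dlasso x u v).
Proof. by rewrite /dlasso -morph_d1w morph_dcirc. Qed.

Lemma morph_dlasso_init u v : dlasso (init Y) u v = omap f2 (dlasso (init X) u v).
Proof. by have [f_init _ _ _] := f_morph; rewrite -f_init morph_dlasso. Qed.

Lemma admissible_morph (c : st2 Y -> Prop) :
  admissible c -> admissible (fun z => c (f2 z)).
Proof.
move=> adm_c u v u' v' nv nv' G.
by have := adm_c u v u' v' nv nv' G; rewrite !morph_dlasso_init !inc_omap.
Qed.

Hypothesis HY : reachable Y.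

Lemma morph_surj1 (x' : st1 Y) : exists x, f1 x = x'.
Proof.
have [f_init _ _ _] := f_morph; have [w <-] := HY.1 x'.
by exists (d1w (init X) w); rewrite morph_d1w f_init.
Qed.

Lemma morph_surj2 (y' : st2 Y) : exists y, f2 y = y'.
Proof.
have [u [v [_]]] := HY.2 y'; rewrite morph_dlasso_init.
by case: (dlasso (init X) u v) => //= y [<-]; exists y.
Qed.

Lemma sim_delta_morph u v : sim_delta X u v -> sim_delta Y u v.
Proof.
move=> [D1 D3]; split=> [x' | y'].
  have [x <-] := morph_surj1 x'.
  by rewrite -!morph_d1w !morph_dcirc; have [-> ->] := D1 x.
by have [y <-] := morph_surj2 y'; rewrite -!morph_d3w D3.
Qed.

Lemma sim_morph (a a' : nat -> option S) : sim X a a' -> sim Y a a'.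
Proof.
move=> E u v u' v' Ra Ra' x' c adm_c; have [x <-] := morph_surj1 x'.
by rewrite !morph_dlasso !inc_omap; apply: E => //; apply: admissible_morph.
Qed.

End Morphism.
End Lassos.

Theorem mainTheorem16 (S : finType) (X : lasso_aut S) (HX : reachable X) :
  (* ~ is well defined: independent of the chosen lasso representatives *)
  (forall u v u' v' u1 v1 u1' v1' : seq S,
      v != [::] -> v' != [::] -> v1 != [::] -> v1' != [::] ->
      gamma u v u1 v1 -> gamma u' v' u1' v1' ->
      (lasso_sim X u v u' v' <-> lasso_sim X u1 v1 u1' v1')) /\
  (* ~ is an equivalence relation on Sigma^up *)
  (forall w, is_up w -> sim X w w) /\
  (forall w w', is_up w -> is_up w' -> sim X w w' -> sim X w' w) /\
  (forall w w' w'', is_up w -> is_up w' -> is_up w'' ->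
      sim X w w' -> sim X w' w'' -> sim X w w'') /\
  (* ~delta is an equivalence relation on Sigma^+ *)
  (forall u : seq S, u != [::] -> sim_delta X u u) /\
  (forall u v : seq S, u != [::] -> v != [::] ->
      sim_delta X u v -> sim_delta X v u) /\
  (forall u v w : seq S, u != [::] -> v != [::] -> w != [::] ->
      sim_delta X u v -> sim_delta X v w -> sim_delta X u w) /\
  (* compatibility with concatenation *)
  (forall u u' v v' : seq S, u != [::] -> u' != [::] -> v != [::] -> v' != [::] ->
      sim_delta X u u' -> sim_delta X v v' -> sim_delta X (u ++ v) (u' ++ v')) /\
  (* compatibility with the mixed product *)
  (forall (u u' : seq S) w w', u != [::] -> u' != [::] -> is_up w -> is_up w' ->
      sim_delta X u u' -> sim X w w' -> sim X (mixprod u w) (mixprod u' w')) /\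
  (* compatibility with the omega-power *)
  (forall u u' : seq S, u != [::] -> u' != [::] ->
      sim_delta X u u' -> sim X (omega_pow u) (omega_pow u')) /\
  (* functoriality: a morphism X -> Y gives T(X) included in T(Y) *)
  (forall (Y : lasso_aut S) (f1 : st1 X -> st1 Y) (f2 : st2 X -> st2 Y),
      reachable Y -> is_morphism f1 f2 ->
      (forall u v : seq S, u != [::] -> v != [::] ->
          sim_delta X u v -> sim_delta Y u v) /\
      (forall w w', is_up w -> is_up w' -> sim X w w' -> sim Y w w')).
Proof.
split; first exact: lasso_sim_gammaE.
split; first by move=> w _; apply: sim_refl.
split; first by move=> w w' _ _; apply: sim_sym.
split; first by move=> w w' w'' _ up_w' _; apply: sim_trans.
split; first by move=> u _; apply: sim_delta_refl.
split; first by move=> u v _ _; apply: sim_delta_sym.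
split; first by move=> u v w _ _ _; apply: sim_delta_trans.
split; first by move=> u u' v v' nu nu' _ _; apply: sim_delta_cat.
split; first by move=> u u' w w' _ _; apply: sim_mixprod.
split; first exact: sim_omega_pow.
move=> Y f1 f2 HY f_morph; split=> [u v _ _ | w w' _ _].
  exact: (sim_delta_morph f_morph HY).
exact: (sim_morph f_morph HY).
Qed.
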